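(* Let $M\in\mathbb{R}^{n\times n}$ be a P$_s$-matrix, $q\in\mathbb{R}^n$ and $r\ge2$. Then for every $\gamma\ge0$ the level set $$\mathcal{L}_s(f_r,\gamma):=\{x\in S: f_r(x)\le\gamma\}$$ is bounded. Moreover, $\mathrm{sol}(M,q)\cap S\subseteq\operatorname{argmin}_{x\in S}f_r(x)$, and both of these sets are bounded.
   Context: $f_r(x)=\frac1r\big[\langle x_+^r,(Mx+q)_+^r\rangle+\|x_-\|_r^r+\|(Mx+q)_-\|_r^r\big]$ with $a_+=\max\{a,0\}$, $a_-=\min\{a,0\}$ componentwise, $x_+^r$ the componentwise $r$th power of $x_+$, $\|z\|_r^r=\sum_i|z_i|^r$. $S=\{x\in\mathbb{R}^n:\|x\|_0\le s\}$ ($\|x\|_0$ = number of nonzero entries). $\mathrm{sol}(M,q)=\{x: x\ge0,\ Mx+q\ge0,\ \langle x,Mx+q\rangle=0\}$. A P$_s$-matrix is a square matrix all of whose principal minors of order up to $s$ are positive. *)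

From HB Require Import structures.
From mathcomp Require Import all_boot all_order all_algebra.
From mathcomp Require Import all_classical all_reals all_analysis.
Set Implicit Arguments. Unset Strict Implicit. Unset Printing Implicit Defensive.
Import Order.TTheory GRing.Theory Num.Theory.
Import numFieldNormedType.Exports.
Local Open Scope classical_set_scope.
Local Open Scope ring_scope.

Definition posp (R : realType) (a : R) : R := Num.max a 0.
Definition negp (R : realType) (a : R) : R := Num.min a 0.

Definition affF (R : realType) (n : nat) (M : 'M[R]_n) (q : 'cV[R]_n)
  (x : 'cV[R]_n) : 'cV[R]_n := M *m x + q.

Definition f_r (R : realType) (n : nat) (M : 'M[R]_n) (q : 'cV[R]_n) (r : R)
  (x : 'cV[R]_n) : R :=
  r^-1 * (\sum_(i < n) ((posp (x i 0)) `^ r * (posp (affF M q x i 0)) `^ r)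
          + \sum_(i < n) `|negp (x i 0)| `^ r
          + \sum_(i < n) `|negp (affF M q x i 0)| `^ r).

Definition l0norm (R : realType) (n : nat) (x : 'cV[R]_n) : nat :=
  #|[set i : 'I_n | x i 0 != 0]|.

Definition sparse_set (R : realType) (n s : nat) : set 'cV[R]_n :=
  [set x : 'cV[R]_n | (l0norm x <= s)%N].

Definition sol (R : realType) (n : nat) (M : 'M[R]_n) (q : 'cV[R]_n)
  : set 'cV[R]_n :=
  [set x : 'cV[R]_n | (forall i, 0 <= x i 0) /\ (forall i, 0 <= affF M q x i 0)
           /\ \sum_(i < n) x i 0 * affF M q x i 0 = 0].

Definition principal_submx (R : realType) (n : nat) (M : 'M[R]_n)
  (I : {set 'I_n}) : 'M[R]_#|I| :=
  \matrix_(i < #|I|, j < #|I|) M (enum_val i) (enum_val j).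

Definition Ps_matrix (R : realType) (n s : nat) (M : 'M[R]_n) : Prop :=
  forall I : {set 'I_n}, (0 < #|I|)%N -> (#|I| <= s)%N ->
    0 < \det (principal_submx M I).

Definition level_set (R : realType) (n s : nat) (M : 'M[R]_n) (q : 'cV[R]_n)
  (r gamma : R) : set 'cV[R]_n :=
  [set x : 'cV[R]_n | @sparse_set R n s x /\ f_r M q r x <= gamma].

Definition argmin_S (R : realType) (n s : nat) (M : 'M[R]_n) (q : 'cV[R]_n)
  (r : R) : set 'cV[R]_n :=
  [set x : 'cV[R]_n | @sparse_set R n s x /\
           forall y, @sparse_set R n s y -> f_r M q r x <= f_r M q r y].

From HB Require Import structures.
From mathcomp Require Import all_boot all_order all_algebra.
From mathcomp Require Import all_classical all_reals all_analysis.
From mathcomp Require Import lra.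

Set Implicit Arguments.
Unset Strict Implicit.
Unset Printing Implicit Defensive.
Import Order.TTheory GRing.Theory Num.Theory.
Import numFieldNormedType.Exports.
Local Open Scope classical_set_scope.
Local Open Scope ring_scope.

(* Every summand of r * f_r(x) is at most r * f_r(x), and r >= 1 turns a bound
   on u ^ r into one on u.  Hence on a level set the negative parts of x and of
   F(x) = Mx + q are bounded, and so is x_i F_i(x) whenever x_i >= 1.  The
   coordinates with x_i < 1 are therefore bounded.  Those in J = {i | x_i >= 1}
   lie in the support, so |J| <= s, and F_J(x) is bounded; thus x_J solves the
   principal system M_JJ x_J = F_J(x) - q_J - M_JJ' x_J' (J' the complement)
   with bounded right-hand side, and nonsingularity of M_JJ bounds x_J by a
   constant depending only on M.  Solutions of the LCP are zeros of f_r >= 0,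
   hence minimisers, and minimisers over S lie in the level set of f_r(0). *)

Lemma bounded_setS (K : numFieldType) (V : pseudoMetricNormedZmodType K)
    (A B : set V) :
  A `<=` B -> bounded_set B -> bounded_set A.
Proof. by move=> AB; apply: sub_boundedr => P BP x /AB; apply: BP. Qed.

Lemma bounded_set_cV (R : realType) (n : nat) (A : set 'cV[R]_n) (C : R) :
  (forall x, A x -> forall i, `|x i 0| <= C) -> bounded_set A.
Proof.
move=> AC; exists (Num.max C 0); split; first exact: num_real.
move=> D /ltW CD x Ax; apply: le_trans CD.
change (mx_norm x <= Num.max C 0); rewrite mx_normrE.
apply: bigmax_le => [|[i j] _ /=]; first by rewrite le_max lexx orbT.
by rewrite (ord1 j) le_max AC.
Qed.

Lemma ler_sum_term (R : numDomainType) (I : finType) (F : I -> R) (i : I) :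
  (forall j, 0 <= F j) -> F i <= \sum_j F j.
Proof. by move=> F0; rewrite (bigD1 i) //= lerDl sumr_ge0. Qed.

Section ScalarBounds.
Context {R : realType}.
Implicit Types u v a : R.

Lemma le1D_powR (r u c : R) : 1 <= r -> 0 <= u -> u `^ r <= c -> u <= 1 + c.
Proof.
move=> r1 u0 uc; have [u1|/ltW u1] := leP u 1.
  by rewrite (le_trans u1) // lerDl (le_trans _ uc) ?powR_ge0.
apply: (@le_trans _ _ c); last by rewrite lerDr.
apply: le_trans uc; by rewrite -{1}(powRr1 u0) ler_powR.
Qed.

Lemma posp_ge0 u : 0 <= posp u.
Proof. by rewrite /posp le_max lexx orbT. Qed.

Lemma norm_le_of_negp_lt1 u a : 1 <= a -> `|negp u| <= a -> u < 1 -> `|u| <= a.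
Proof.
rewrite /negp => a1; have [u0|_] := leP 0 u; last by move=> ua _.
by rewrite normr0 ger0_norm // => _ /ltW u1; apply: le_trans a1.
Qed.

Lemma norm_le_of_posp_mul_ge1 u v a :
  `|negp v| <= a -> posp u * posp v <= a -> 1 <= u -> `|v| <= a.
Proof.
move=> va uva u1; have {uva} : posp v <= a.
  apply: le_trans uva; rewrite /posp (max_l (le_trans ler01 u1)).
  by rewrite ler_peMl // posp_ge0.
move: va; rewrite /posp /negp; have [v0|_] := leP 0 v => //.
by move=> _; rewrite ger0_norm.
Qed.

End ScalarBounds.

Section Merit.
Variables (R : realType) (n : nat) (M : 'M[R]_n) (q : 'cV[R]_n) (r : R).
Implicit Types x : 'cV[R]_n.

Lemma f_r_ge0 x : 0 < r -> 0 <= f_r M q r x.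
Proof.
move=> r0; rewrite /f_r mulr_ge0 ?invr_ge0 ?(ltW r0) //.
by rewrite !addr_ge0 // sumr_ge0 // => i _; rewrite ?mulr_ge0 ?powR_ge0.
Qed.

Lemma f_r_sol x : 0 < r -> sol M q x -> f_r M q r x = 0.
Proof.
move=> r0 [x0 [F0 /eqP]]; rewrite psumr_eq0 => [/allP xF0|i _]; last first.
  exact: mulr_ge0.
have {}xF0 i : x i 0 * affF M q x i 0 = 0 by apply/eqP/xF0/mem_index_enum.
rewrite /f_r /posp /negp !big1 ?addr0 ?mulr0 // => i _.
- by rewrite min_r // normr0 powR0 ?gt_eqF.
- by rewrite min_r // normr0 powR0 ?gt_eqF.
- by rewrite !max_l // -powRM // xF0 powR0 ?gt_eqF.
Qed.

Lemma f_r_term_bounds x i : 1 <= r ->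
  [/\ `|negp (x i 0)| <= 1 + r * f_r M q r x,
      `|negp (affF M q x i 0)| <= 1 + r * f_r M q r x &
      posp (x i 0) * posp (affF M q x i 0) <= 1 + r * f_r M q r x].
Proof.
move=> r1; have r0 : 0 < r by apply: lt_le_trans r1.
pose S1 := \sum_j posp (x j 0) `^ r * posp (affF M q x j 0) `^ r.
pose S2 := \sum_j `|negp (x j 0)| `^ r.
pose S3 := \sum_j `|negp (affF M q x j 0)| `^ r.
have -> : r * f_r M q r x = S1 + S2 + S3 by rewrite /f_r mulVKf ?gt_eqF.
have S1_ge0 : 0 <= S1 by apply: sumr_ge0 => j _; rewrite mulr_ge0 ?powR_ge0.
have S2_ge0 : 0 <= S2 by apply: sumr_ge0 => j _; rewrite powR_ge0.
have S3_ge0 : 0 <= S3 by apply: sumr_ge0 => j _; rewrite powR_ge0.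
split; apply: (le1D_powR r1); rewrite ?mulr_ge0 ?posp_ge0 ?powRM ?posp_ge0 //.
- apply: le_trans (_ : S2 <= _); last by lra.
  by apply: ler_sum_term => j; rewrite powR_ge0.
- apply: le_trans (_ : S3 <= _); last by lra.
  by apply: ler_sum_term => j; rewrite powR_ge0.
- apply: le_trans (_ : S1 <= _); last by lra.
  by apply: ler_sum_term => j; rewrite mulr_ge0 ?powR_ge0.
Qed.

End Merit.

Lemma normr_le_invmx (R : numFieldType) m (A : 'M[R]_m) (z : 'cV[R]_m)
    (b : R) k :
  A \in unitmx -> (forall l, `|(A *m z) l 0| <= b) ->
  `|z k 0| <= (\sum_l `|invmx A k l|) * b.
Proof.
move=> uA Azb; rewrite -(mulKmx uA z) [X in `|X|]mxE mulr_suml.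
apply: le_trans (ler_norm_sum _ _ _) _; apply: ler_sum => l _.
by rewrite normrM ler_wpM2l.
Qed.

Lemma normr_sum_mul_le (R : numDomainType) (I : finType) (P : pred I)
    (c u : I -> R) (a : R) :
  0 <= a -> (forall j, P j -> `|u j| <= a) ->
  `|\sum_(j | P j) c j * u j| <= (\sum_j `|c j|) * a.
Proof.
move=> a0 ua.
apply: le_trans (ler_norm_sum _ _ _) _; rewrite mulr_suml big_mkcond /=.
apply: ler_sum => j _; case: ifP => Pj; last by rewrite mulr_ge0.
by rewrite normrM ler_wpM2l ?ua.
Qed.

Section PrincipalSystem.
Context {R : realType} {n : nat}.
Variable M : 'M[R]_n.

Definition restr_cV (J : {set 'I_n}) (x : 'cV[R]_n) : 'cV[R]_#|J| :=
  \col_k x (enum_val k) 0.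

Lemma principal_submx_mul_restr (J : {set 'I_n}) (x : 'cV[R]_n) k :
  (principal_submx M J *m restr_cV J x) k 0 =
  (M *m x) (enum_val k) 0 - \sum_(j | j \notin J) M (enum_val k) j * x j 0.
Proof.
rewrite !mxE (bigID (mem J)) /= addrK [RHS]big_enum_val.
by apply: eq_bigr => l _; rewrite !mxE.
Qed.

Definition principal_unitmx (s : nat) : Prop :=
  forall J : {set 'I_n}, (0 < #|J|)%N -> (#|J| <= s)%N ->
    principal_submx M J \in unitmx.

Lemma Ps_matrix_principal_unitmx s : Ps_matrix s M -> principal_unitmx s.
Proof. by move=> PM J J0 Js; rewrite unitmxE unitfE lt0r_neq0 ?PM. Qed.

Definition sum_abs_entries : R := \sum_i \sum_j `|M i j|.

Definition sum_abs_principal_inverses : R :=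
  \sum_(J : {set 'I_n}) \sum_k \sum_l `|invmx (principal_submx M J) k l|.

Lemma principal_entry_bound (J : {set 'I_n}) (x : 'cV[R]_n) (a b : R) i :
  principal_submx M J \in unitmx -> 0 <= a ->
  (forall j, j \notin J -> `|x j 0| <= a) ->
  (forall j, j \in J -> `|(M *m x) j 0| <= b) ->
  i \in J -> `|x i 0| <= sum_abs_principal_inverses * (b + sum_abs_entries * a).
Proof.
move=> uA a0 xa Mxb Ji.
have Ab l :
    `|(principal_submx M J *m restr_cV J x) l 0| <= b + sum_abs_entries * a.
  rewrite principal_submx_mul_restr; apply: le_trans (ler_normB _ _) _.
  rewrite lerD ?Mxb ?enum_valP //; apply: le_trans (normr_sum_mul_le _ a0 xa) _.
  rewrite ler_wpM2r // /sum_abs_entries.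
  by apply: ler_sum_term => k; apply: sumr_ge0.
pose ki := enum_rank_in Ji i.
have b0 : 0 <= b + sum_abs_entries * a by apply: le_trans (Ab ki).
have -> : x i 0 = restr_cV J x ki 0 by rewrite mxE enum_rankK_in.
apply: le_trans (normr_le_invmx _ uA Ab) _; rewrite ler_wpM2r //.
pose absinv K k := \sum_l `|invmx (principal_submx M K) k l|.
have absinv_ge0 K k : 0 <= absinv K k by apply: sumr_ge0.
apply: le_trans (ler_sum_term _ (absinv_ge0 J)) _.
rewrite /sum_abs_principal_inverses.
apply: (ler_sum_term (F := fun K => \sum_k absinv K k)) => K.
exact: sumr_ge0.
Qed.

End PrincipalSystem.

Section SparseLevelSets.
Context {R : realType} {n : nat}.
Variables (s : nat) (M : 'M[R]_n) (q : 'cV[R]_n).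

Lemma card_le_l0norm (x : 'cV[R]_n) (J : {set 'I_n}) :
  {in J, forall j, x j 0 != 0} -> (#|J| <= l0norm x)%N.
Proof.
by move=> Jx; apply/subset_leq_card/fintype.subsetP => j /Jx; rewrite inE.
Qed.

Lemma sparse_set0 : sparse_set s (0 : 'cV[R]_n).
Proof.
rewrite /sparse_set /= /l0norm eq_card0 // => i.
by apply/negbTE/negP; rewrite in_setE /= mxE eqxx.
Qed.

Lemma level_set_bounded (r g : R) :
  principal_unitmx M s -> 1 <= r -> 0 <= g -> bounded_set (level_set s M q r g).
Proof.
move=> uM r1 g0; have r0 : 0 <= r by apply: le_trans r1.
pose a := 1 + r * g; have a1 : 1 <= a by rewrite lerDl mulr_ge0.
have a0 : 0 <= a by apply: le_trans a1.
pose b := a + \sum_i `|q i 0|.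
apply: (bounded_set_cV (C := Num.max a
  (sum_abs_principal_inverses M * (b + sum_abs_entries M * a)))).
move=> x [Sx fg] i; rewrite le_max.
have bounds j : [/\ `|negp (x j 0)| <= a, `|negp (affF M q x j 0)| <= a &
                   posp (x j 0) * posp (affF M q x j 0) <= a].
  have rfa : 1 + r * f_r M q r x <= a by rewrite lerD2l ler_wpM2l.
  by have [? ? ?] := f_r_term_bounds M q x j r1; split; apply: le_trans rfa.
have small j : x j 0 < 1 -> `|x j 0| <= a.
  by have [? _ _] := bounds j; apply: norm_le_of_negp_lt1.
pose J := [set j | 1 <= x j 0]%SET.
have [Ji|] := boolP (i \in J); last by rewrite inE -ltNge => /small ->.
apply/orP; right; apply: principal_entry_bound (Ji) => //.
- apply: uM; first by apply/card_gt0P; exists i.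
  apply: leq_trans (Sx : (l0norm x <= s)%N).
  apply: card_le_l0norm => j; rewrite inE.
  by apply: contraTneq => ->; rewrite ler10.
- by move=> j; rewrite inE -ltNge; apply: small.
- move=> j; rewrite inE => xj1; have [_ ? ?] := bounds j.
  have -> : (M *m x) j 0 = affF M q x j 0 - q j 0.
    by rewrite /affF [in RHS]mxE addrK.
  apply: le_trans (ler_normB _ _) _; rewrite lerD //.
    exact: norm_le_of_posp_mul_ge1 xj1.
  by apply: ler_sum_term => k.
Qed.

End SparseLevelSets.

Theorem theorem4p4 (R : realType) (n s : nat) (M : 'M[R]_n) (q : 'cV[R]_n)
  (r : R) :
  Ps_matrix s M -> 2 <= r ->
  (forall gamma : R, 0 <= gamma -> bounded_set (level_set s M q r gamma)) /\
  (sol M q `&` @sparse_set R n s `<=` argmin_S s M q r) /\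
  bounded_set (sol M q `&` @sparse_set R n s) /\
  bounded_set (argmin_S s M q r).
Proof.
move=> /Ps_matrix_principal_unitmx uM r2.
have r1 : 1 <= r by apply: le_trans r2; rewrite ler1n.
have r0 : 0 < r by apply: lt_le_trans r1.
have level_bounded g : 0 <= g -> bounded_set (level_set s M q r g).
  exact: level_set_bounded.
have sol_level0 : sol M q `&` sparse_set s `<=` level_set s M q r 0.
  by move=> x [solx Sx]; split; rewrite // f_r_sol.
have argmin_level : argmin_S s M q r `<=` level_set s M q r (f_r M q r 0).
  by move=> x [Sx xmin]; split; last exact/xmin/sparse_set0.
split=> //; split.
  by move=> x [solx Sx]; split=> // y _; rewrite f_r_sol ?f_r_ge0.
split; first exact: bounded_setS sol_level0 (level_bounded _ _).
exact: bounded_setS argmin_level (level_bounded _ (f_r_ge0 M q 0 r0)).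
Qed.
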